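(* Let $K$ be an open Legendrian knot for which \begin{equation} d_{\mathcal{H}}(p,q)=d_K(p,q)\qquad\text{for any $p$, $q\in K\setminus\{\infty\}$}. \end{equation} Then, $K$ is an infinite $\mathbb{R}$-circle.
   Context: $\mathcal{H}=\mathbb{C}\times\mathbb{R}$ is the 3-dimensional Heisenberg group with coordinates $(x,y,u)$, group law $(x,y,u)\cdot(x',y',u')=(x+x',y+y',u+u'+\tfrac12(xy'-x'y))$, horizontal distribution spanned by $X=\partial_x-\tfrac12 y\,\partial_u$, $Y=\partial_y+\tfrac12 x\,\partial_u$ (orthonormal, norm $|\cdot|$). The Korányi distance is $d_{\mathcal{H}}(p,q)=\|p^{-1}q\|_{\mathcal{H}}$, $\|(x,y,u)\|_{\mathcal{H}}=\sqrt[4]{(x^2+y^2)^2+16u^2}$. An open Legendrian knot is a smooth embedded closed Legendrian curve in $\mathcal{H}\cup\{\infty\}\cong S^3$ passing through $\infty$; $d_K$ denotes arc-length distance along $K$. An $\mathbb{R}$-circle is the intersection of $\partial B^2_{\mathbb{C}}\cong\mathcal{H}\cup\{\infty\}$ with the closure of a complete totally geodesic totally real surface in the complex hyperbolic unit ball $B^2_{\mathbb{C}}$; it is infinite if it passes through $\infty$. Equivalently, infinite $\mathbb{R}$-circles are exactly the open Legendrian knots whose vertical projection $(x,y,u)\mapsto(x,y)$ is an affine line in $\mathbb{C}$, i.e., the lines $\{(x_0,y_0,u_0)+t(a,b,-\tfrac12(y_0a-x_0b)):t\in\mathbb{R}\}$ with $(a,b)\neq(0,0)$. *)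

From Stdlib Require Import Reals.
From Coquelicot Require Import Coquelicot.
Open Scope R_scope.

(* Points of the Heisenberg group H = C x R, coordinates (x, y, u). *)
Definition Hpt := (R * R * R)%type.

Definition hmul (p q : Hpt) : Hpt :=
  let '(x, y, u) := p in let '(x', y', u') := q in
  (x + x', y + y', u + u' + / 2 * (x * y' - x' * y)).

Definition hinv (p : Hpt) : Hpt :=
  let '(x, y, u) := p in (- x, - y, - u).

Definition koranyi_norm (p : Hpt) : R :=
  let '(x, y, u) := p in sqrt (sqrt ((x ^ 2 + y ^ 2) ^ 2 + 16 * u ^ 2)).

Definition koranyi_dist (p q : Hpt) : R := koranyi_norm (hmul (hinv p) q).

Definition curve (x y u : R -> R) (t : R) : Hpt := (x t, y t, u t).

(* Open Legendrian knot, described through a parametrization of K \ {oo}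
   by the real line:  smooth (C^infinity) coordinates, regular, injective,
   Legendrian (velocity in span{X,Y}, i.e. u' = (x y' - y x')/2),
   and going to oo at both ends (so that K = image ∪ {oo} is a closed curve
   in S^3 passing through oo). *)
Definition open_legendrian_knot (x y u : R -> R) : Prop :=
  (forall (n : nat) (t : R),
      ex_derive_n x n t /\ ex_derive_n y n t /\ ex_derive_n u n t) /\
  (forall t, Derive x t <> 0 \/ Derive y t <> 0) /\
  (forall s t, curve x y u s = curve x y u t -> s = t) /\
  (forall t, Derive u t = / 2 * (x t * Derive y t - y t * Derive x t)) /\
  filterlim (fun t => koranyi_norm (curve x y u t))
            (Rbar_locally p_infty) (Rbar_locally p_infty) /\
  filterlim (fun t => koranyi_norm (curve x y u t))
            (Rbar_locally m_infty) (Rbar_locally p_infty).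

(* Horizontal speed |gamma'(t)| (for a Legendrian curve, gamma' = x' X + y' Y). *)
Definition hspeed (x y : R -> R) (t : R) : R :=
  sqrt (Derive x t ^ 2 + Derive y t ^ 2).

(* Arc-length distance along K between gamma(s) and gamma(t) (the finite arc). *)
Definition arc_dist (x y : R -> R) (s t : R) : R :=
  Rabs (RInt (hspeed x y) s t).

(* Infinite R-circle: a line whose vertical projection is an affine line of C. *)
Definition R_line (x0 y0 u0 a b : R) (t : R) : Hpt :=
  (x0 + t * a, y0 + t * b, u0 - t * (/ 2 * (y0 * a - x0 * b))).

Definition is_infinite_R_circle (K : Hpt -> Prop) : Prop :=
  exists x0 y0 u0 a b : R, (a <> 0 \/ b <> 0) /\
    (forall p, K p <-> exists t, p = R_line x0 y0 u0 a b t).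

From Stdlib Require Import Reals Lra Psatz.
From Coquelicot Require Import Coquelicot.
Open Scope R_scope.
Set Bullet Behavior "Strict Subproofs".

(** Write [gamma(s)^-1 gamma(t) = (D, W)] with [D] in [C] and [W] real, and let [L] be the arc
    length from [s] to [t].  The hypothesis reads [|D|^4 + 16 W^2 = L^4].  Differentiating in [t],
    with [L' = |gamma'|] and, by the Legendrian condition, [W' = (D x gamma') / 2], produces an
    equality case of Cauchy-Schwarz which forces [W = 0] and [|D| = L].  So the projection of the
    knot to [C] is a plane curve whose chords are as long as its arcs, hence a straight line, and
    [W = 0] makes the knot the horizontal lift of that line.  The knot covers the whole line by the
    intermediate value theorem, since it leaves every compact set at both ends. *)

(* [A = |D|^2], [B = D . gamma'], [C = D x gamma'], [v = |gamma'|]; the last hypothesis is the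
   derivative of [A^2 + 16 W^2 = L^4], divided by 4.  Cauchy-Schwarz
   [(A^2 + 16 W^2)(B^2 + C^2) >= (A B + 4 W C)^2] gives [L^2 <= A], hence [16 W^2 <= 0]. *)
Lemma vertical_eq0_of_gauge_rate (A B C W L v : R) :
  0 <= A -> 0 < v -> B ^ 2 + C ^ 2 = A * v ^ 2 ->
  A ^ 2 + 16 * W ^ 2 = L ^ 4 -> A * B + 4 * W * C = L ^ 3 * v -> W = 0.
Proof.
  intros HA Hv HBC HQ HQ'.
  assert (HCS : L ^ 6 * v ^ 2 <= L ^ 4 * A * v ^ 2).
  { assert (E : (A ^ 2 + 16 * W ^ 2) * (B ^ 2 + C ^ 2) - (A * B + 4 * W * C) ^ 2
              = (A * C - 4 * W * B) ^ 2) by ring.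
    rewrite HQ, HBC, HQ' in E.
    pose proof (pow2_ge_0 (A * C - 4 * W * B)). nra. }
  assert (HL : L ^ 4 <= A ^ 2).
  { destruct (Req_dec L 0) as [HL0|HL0]; [subst L; simpl; nra|].
    assert (0 < L ^ 2) by (rewrite <- Rsqr_pow2; apply Rsqr_pos_lt; exact HL0).
    assert (0 < L ^ 4 * v ^ 2)
      by (replace (L ^ 4) with (L ^ 2 * L ^ 2) by ring; apply Rmult_lt_0_compat; nra).
    assert (L ^ 2 <= A) by nra.
    nra. }
  nra.
Qed.

Lemma triangle_eq_collinear (a1 a2 b1 b2 l m : R) :
  0 <= l -> 0 <= m -> a1 ^ 2 + a2 ^ 2 = l ^ 2 -> b1 ^ 2 + b2 ^ 2 = m ^ 2 ->
  (a1 + b1) ^ 2 + (a2 + b2) ^ 2 = (l + m) ^ 2 ->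
  a1 * b2 - a2 * b1 = 0 /\ 0 <= a1 * b1 + a2 * b2.
Proof.
  intros Hl Hm Ha Hb Hab.
  assert (Hdot : a1 * b1 + a2 * b2 = l * m) by nra.
  split; [|rewrite Hdot; nra].
  assert (E : (a1 * b2 - a2 * b1) ^ 2
              = (a1 ^ 2 + a2 ^ 2) * (b1 ^ 2 + b2 ^ 2) - (a1 * b1 + a2 * b2) ^ 2) by ring.
  rewrite Ha, Hb, Hdot in E. nra.
Qed.

Lemma sqrt_sqrt_pow4 (q : R) : 0 <= q -> sqrt (sqrt q) ^ 4 = q.
Proof.
  intros Hq.
  replace (sqrt (sqrt q) ^ 4)
    with ((sqrt (sqrt q) * sqrt (sqrt q)) * (sqrt (sqrt q) * sqrt (sqrt q))) by ring.
  rewrite sqrt_sqrt by apply sqrt_pos.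
  exact (sqrt_sqrt q Hq).
Qed.

Lemma koranyi_norm_pow4 (x y u : R) :
  koranyi_norm (x, y, u) ^ 4 = (x ^ 2 + y ^ 2) ^ 2 + 16 * u ^ 2.
Proof.
  apply sqrt_sqrt_pow4.
  pose proof (pow2_ge_0 (x ^ 2 + y ^ 2)); pose proof (pow2_ge_0 u); lra.
Qed.

Lemma koranyi_dist_pow4 (x1 y1 u1 x2 y2 u2 : R) :
  koranyi_dist (x1, y1, u1) (x2, y2, u2) ^ 4 =
  ((x2 - x1) ^ 2 + (y2 - y1) ^ 2) ^ 2 + 16 * (u2 - u1 - / 2 * (x1 * y2 - x2 * y1)) ^ 2.
Proof. unfold koranyi_dist, hmul, hinv; rewrite koranyi_norm_pow4; ring. Qed.

Lemma continuity_koranyi_norm_R_line (x0 y0 u0 a b : R) :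
  continuity (fun l => koranyi_norm (R_line x0 y0 u0 a b l)).
Proof.
  set (q := fun l => ((x0 + l * a) ^ 2 + (y0 + l * b) ^ 2) ^ 2
                     + 16 * (u0 - l * (/ 2 * (y0 * a - x0 * b))) ^ 2).
  assert (Hq : forall l, 0 <= q l).
  { intros l. unfold q.
    pose proof (pow2_ge_0 ((x0 + l * a) ^ 2 + (y0 + l * b) ^ 2)).
    pose proof (pow2_ge_0 (u0 - l * (/ 2 * (y0 * a - x0 * b)))). lra. }
  assert (Hqc : continuity q).
  { intros l. apply continuity_pt_filterlim, (@ex_derive_continuous R_AbsRing R_NormedModule).
    unfold q. auto_derive. exact I. }
  intros l. apply (continuity_pt_comp (fun l => sqrt (q l)) sqrt).
  - apply (continuity_pt_comp q sqrt); [apply Hqc | apply continuity_pt_sqrt, Hq].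
  - apply continuity_pt_sqrt, sqrt_pos.
Qed.

Lemma filterlim_escape_segment (F : (R -> Prop) -> Prop) {FF : Filter F}
  (g f : R -> R) (a b : R) :
  continuity g -> filterlim (fun t => g (f t)) F (Rbar_locally p_infty) ->
  F (fun t => f t < a \/ b < f t).
Proof.
  intros Hg Hlim.
  destruct (Rle_lt_dec a b) as [Hab|Hba].
  - destruct (continuity_ab_maj g a b Hab) as [m [Hm _]]; [intros; apply Hg|].
    apply (filter_imp (fun t => g m < g (f t))).
    + intros t Ht.
      destruct (Rlt_or_le (f t) a) as [|Ha]; [now left|].
      destruct (Rlt_or_le b (f t)) as [|Hb]; [now right|].
      specialize (Hm (f t) (conj Ha Hb)). lra.
    + apply Hlim. exists (g m). auto.
  - apply filter_forall. intros t. destruct (Rlt_or_le (f t) a); [now left|right; lra].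
Qed.

Lemma filterlim_p_infty_of_escape (F : (R -> Prop) -> Prop) {FF : Filter F}
  (g f : R -> R) (c : R) :
  continuity g -> filterlim (fun t => g (f t)) F (Rbar_locally p_infty) ->
  F (fun t => c <= f t) -> filterlim f F (Rbar_locally p_infty).
Proof.
  intros Hg Hlim Hc P [M HM]; unfold filtermap.
  apply (filter_imp (fun t => c <= f t /\ (f t < c \/ Rmax c M < f t))).
  - intros t [H1 [H2|H2]]; [lra|]. apply HM. pose proof (Rmax_r c M). lra.
  - apply filter_and; [exact Hc | exact (filterlim_escape_segment F g f _ _ Hg Hlim)].
Qed.

Lemma filterlim_m_infty_of_escape (F : (R -> Prop) -> Prop) {FF : Filter F}
  (g f : R -> R) (c : R) :
  continuity g -> filterlim (fun t => g (f t)) F (Rbar_locally p_infty) ->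
  F (fun t => f t <= c) -> filterlim f F (Rbar_locally m_infty).
Proof.
  intros Hg Hlim Hc P [M HM]; unfold filtermap.
  apply (filter_imp (fun t => f t <= c /\ (f t < Rmin c M \/ c < f t))).
  - intros t [H1 [H2|H2]]; [|lra]. apply HM. pose proof (Rmin_r c M). lra.
  - apply filter_and; [exact Hc | exact (filterlim_escape_segment F g f _ _ Hg Hlim)].
Qed.

Lemma continuity_surjective_of_filterlim (f : R -> R) :
  continuity f ->
  filterlim f (Rbar_locally p_infty) (Rbar_locally p_infty) ->
  filterlim f (Rbar_locally m_infty) (Rbar_locally m_infty) ->
  forall m, exists t, f t = m.
Proof.
  intros Hf Hp Hm m.
  destruct (Hp (fun z => m < z)) as [T1 HT1]; [now exists m|].
  destruct (Hm (fun z => z < m)) as [T2 HT2]; [now exists m|].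
  assert (H1 : m < f (T1 + 1)) by (apply HT1; lra).
  assert (H2 : f (T2 - 1) < m) by (apply HT2; lra).
  destruct (IVT_gen f (T2 - 1) (T1 + 1) m Hf) as [t [_ Ht]].
  - split; [apply Rle_trans with (f (T2 - 1)) | apply Rle_trans with (f (T1 + 1))];
      auto using Rmin_l, Rmax_r with real.
  - now exists t.
Qed.

Lemma collinear_decomposition (a b X Y : R) :
  0 < a ^ 2 + b ^ 2 -> a * Y - b * X = 0 ->
  X = (a * X + b * Y) / (a ^ 2 + b ^ 2) * a /\ Y = (a * X + b * Y) / (a ^ 2 + b ^ 2) * b.
Proof.
  intros HD Hc.
  split; field_simplify_eq; try lra.
  - transitivity (X * a ^ 2 + a * b * Y - b * (a * Y - b * X)); [ring | rewrite Hc; ring].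
  - transitivity (Y * b ^ 2 + a * X * b + a * (a * Y - b * X)); [ring | rewrite Hc; ring].
Qed.

Section LegendrianKnot.

Variables x y u : R -> R.
Hypothesis Hknot : open_legendrian_knot x y u.

Lemma ex_derive_x t : ex_derive x t.
Proof. exact (proj1 (proj1 Hknot 1%nat t)). Qed.

Lemma ex_derive_y t : ex_derive y t.
Proof. exact (proj1 (proj2 (proj1 Hknot 1%nat t))). Qed.

Lemma ex_derive_u t : ex_derive u t.
Proof. exact (proj2 (proj2 (proj1 Hknot 1%nat t))). Qed.

Lemma ex_derive_Derive_x t : ex_derive (Derive x) t.
Proof. exact (proj1 (proj1 Hknot 2%nat t)). Qed.

Lemma ex_derive_Derive_y t : ex_derive (Derive y) t.
Proof. exact (proj1 (proj2 (proj1 Hknot 2%nat t))). Qed.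

Lemma hspeed_sq_gt0 t : 0 < Derive x t ^ 2 + Derive y t ^ 2.
Proof.
  pose proof (pow2_ge_0 (Derive x t)); pose proof (pow2_ge_0 (Derive y t)).
  destruct (proj1 (proj2 Hknot) t) as [Hd|Hd];
    apply Rsqr_pos_lt in Hd; rewrite Rsqr_pow2 in Hd; lra.
Qed.

Lemma hspeed_gt0 t : 0 < hspeed x y t.
Proof. apply sqrt_lt_R0, hspeed_sq_gt0. Qed.

Lemma continuous_hspeed t : continuous (hspeed x y) t.
Proof.
  apply (@ex_derive_continuous R_AbsRing R_NormedModule). unfold hspeed.
  auto_derive; repeat split; auto using ex_derive_Derive_x, ex_derive_Derive_y.
  pose proof (hspeed_sq_gt0 t); simpl in *; lra.
Qed.

Lemma ex_RInt_hspeed a b : ex_RInt (hspeed x y) a b.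
Proof.
  apply (@ex_RInt_continuous R_CompleteNormedModule). intros; apply continuous_hspeed.
Qed.

Definition arc_length s t := RInt (hspeed x y) s t.

Lemma is_derive_arc_length s t : is_derive (arc_length s) t (hspeed x y t).
Proof.
  apply is_derive_RInt with (a := s); [|apply continuous_hspeed].
  apply filter_forall. intros b. apply RInt_correct, ex_RInt_hspeed.
Qed.

Lemma arc_length_ge0 s t : s <= t -> 0 <= arc_length s t.
Proof.
  intros Hst. apply RInt_ge_0; auto using ex_RInt_hspeed.
  intros; apply Rlt_le, hspeed_gt0.
Qed.

Lemma arc_length_gt0 s t : s < t -> 0 < arc_length s t.
Proof.
  intros Hst. apply RInt_gt_0; auto using hspeed_gt0, continuous_hspeed.
Qed.

Lemma arc_length_Chasles s r t : arc_length s r + arc_length r t = arc_length s t.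
Proof. exact (RInt_Chasles _ s r t (ex_RInt_hspeed s r) (ex_RInt_hspeed r t)). Qed.

Definition horizontal_dist2 s t := (x t - x s) ^ 2 + (y t - y s) ^ 2.

Definition vertical_disp s t := u t - u s - / 2 * (x s * y t - x t * y s).

Lemma is_derive_gauge s t :
  is_derive (fun r => horizontal_dist2 s r ^ 2 + 16 * vertical_disp s r ^ 2) t
    (4 * (horizontal_dist2 s t * ((x t - x s) * Derive x t + (y t - y s) * Derive y t)
          + 4 * vertical_disp s t * ((x t - x s) * Derive y t - (y t - y s) * Derive x t))).
Proof.
  unfold horizontal_dist2, vertical_disp. auto_derive.
  - repeat split; auto using ex_derive_x, ex_derive_y, ex_derive_u.
  - change (fun r => x r) with x; change (fun r => y r) with y; change (fun r => u r) with u.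
    rewrite (proj1 (proj2 (proj2 (proj2 Hknot))) t). field.
Qed.

Hypothesis Hdist : forall s t : R,
  koranyi_dist (curve x y u s) (curve x y u t) = arc_dist x y s t.

Lemma gauge_eq_arc_length s t :
  horizontal_dist2 s t ^ 2 + 16 * vertical_disp s t ^ 2 = arc_length s t ^ 4.
Proof.
  unfold horizontal_dist2, vertical_disp.
  rewrite <- koranyi_dist_pow4. fold (curve x y u s) (curve x y u t).
  rewrite Hdist. unfold arc_dist, arc_length.
  replace (Rabs (RInt _ s t) ^ 4) with ((Rabs (RInt (hspeed x y) s t) ^ 2) ^ 2) by ring.
  rewrite pow2_abs. ring.
Qed.

Lemma hspeed_sq t : hspeed x y t ^ 2 = Derive x t ^ 2 + Derive y t ^ 2.
Proof.
  unfold hspeed. rewrite <- Rsqr_pow2, Rsqr_sqrt; [reflexivity | apply Rlt_le, hspeed_sq_gt0].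
Qed.

Lemma horizontal_dist2_ge0 s t : 0 <= horizontal_dist2 s t.
Proof.
  unfold horizontal_dist2.
  pose proof (pow2_ge_0 (x t - x s)); pose proof (pow2_ge_0 (y t - y s)); lra.
Qed.

Lemma vertical_disp_eq0 s t : vertical_disp s t = 0.
Proof.
  assert (Hgauge : is_derive (fun r => horizontal_dist2 s r ^ 2 + 16 * vertical_disp s r ^ 2) t
                     (INR 4 * hspeed x y t * arc_length s t ^ 3)).
  { apply is_derive_ext with (f := fun r => arc_length s r ^ 4).
    - intros r. symmetry. apply gauge_eq_arc_length.
    - apply is_derive_pow, is_derive_arc_length. }
  pose proof (is_derive_unique _ _ _ Hgauge) as E.
  rewrite (is_derive_unique _ _ _ (is_derive_gauge s t)) in E. simpl INR in E.
  apply (vertical_eq0_of_gauge_rate (horizontal_dist2 s t)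
           ((x t - x s) * Derive x t + (y t - y s) * Derive y t)
           ((x t - x s) * Derive y t - (y t - y s) * Derive x t) _
           (arc_length s t) (hspeed x y t)).
  - apply horizontal_dist2_ge0.
  - apply hspeed_gt0.
  - rewrite hspeed_sq. unfold horizontal_dist2. ring.
  - apply gauge_eq_arc_length.
  - lra.
Qed.

Lemma horizontal_dist2_arc_length s t : horizontal_dist2 s t = arc_length s t ^ 2.
Proof.
  pose proof (gauge_eq_arc_length s t) as E. rewrite vertical_disp_eq0 in E.
  pose proof (horizontal_dist2_ge0 s t). pose proof (pow2_ge_0 (arc_length s t)).
  assert (F : (horizontal_dist2 s t - arc_length s t ^ 2)
              * (horizontal_dist2 s t + arc_length s t ^ 2) = 0)
    by (transitivity (horizontal_dist2 s t ^ 2 + 16 * 0 ^ 2 - arc_length s t ^ 4); [ring | lra]).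
  apply Rmult_integral in F. lra.
Qed.

Lemma horizontal_triangle_eq s r t : s <= r -> r <= t ->
  (x r - x s) * (y t - y r) - (y r - y s) * (x t - x r) = 0 /\
  0 <= (x r - x s) * (x t - x r) + (y r - y s) * (y t - y r).
Proof.
  intros Hsr Hrt.
  apply triangle_eq_collinear with (arc_length s r) (arc_length r t);
    try apply arc_length_ge0; try assumption.
  - exact (horizontal_dist2_arc_length s r).
  - exact (horizontal_dist2_arc_length r t).
  - rewrite arc_length_Chasles, <- horizontal_dist2_arc_length.
    unfold horizontal_dist2. ring.
Qed.

Let a := x 1 - x 0.
Let b := y 1 - y 0.

Lemma direction_sq_gt0 : 0 < a ^ 2 + b ^ 2.
Proof.
  change (0 < horizontal_dist2 0 1). rewrite horizontal_dist2_arc_length.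
  apply pow_lt, arc_length_gt0. lra.
Qed.

Lemma collinear_with_direction t : a * (y t - y 0) - b * (x t - x 0) = 0.
Proof.
  unfold a, b.
  destruct (Rlt_or_le t 0) as [Ht0|Ht0]; [|destruct (Rle_or_lt t 1) as [Ht1|Ht1]].
  - destruct (horizontal_triangle_eq t 0 1) as [H _]; lra.
  - destruct (horizontal_triangle_eq 0 t 1) as [H _]; lra.
  - destruct (horizontal_triangle_eq 0 1 t) as [H _]; lra.
Qed.

Definition line_param t := (a * (x t - x 0) + b * (y t - y 0)) / (a ^ 2 + b ^ 2).

Lemma line_param_spec t : x t - x 0 = line_param t * a /\ y t - y 0 = line_param t * b.
Proof. exact (collinear_decomposition _ _ _ _ direction_sq_gt0 (collinear_with_direction t)). Qed.

Lemma curve_eq_R_line t : curve x y u t = R_line (x 0) (y 0) (u 0) a b (line_param t).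
Proof.
  destruct (line_param_spec t) as [Ex Ey].
  pose proof (vertical_disp_eq0 0 t) as Eu. unfold vertical_disp in Eu.
  unfold curve, R_line. f_equal; [f_equal|]; try lra.
  replace (x t) with (x 0 + line_param t * a) in Eu by lra.
  replace (y t) with (y 0 + line_param t * b) in Eu by lra.
  lra.
Qed.

Lemma line_param_ge1 t : 1 < t -> 1 <= line_param t.
Proof.
  intros Ht. destruct (horizontal_triangle_eq 0 1 t) as [_ Hdot]; try lra.
  destruct (line_param_spec t) as [Ex Ey]. fold a b in Hdot.
  replace (x t - x 1) with ((line_param t - 1) * a) in Hdot
    by (rewrite Rmult_minus_distr_r, <- Ex; unfold a; ring).
  replace (y t - y 1) with ((line_param t - 1) * b) in Hdot
    by (rewrite Rmult_minus_distr_r, <- Ey; unfold b; ring).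
  pose proof direction_sq_gt0. nra.
Qed.

Lemma line_param_le0 t : t < 0 -> line_param t <= 0.
Proof.
  intros Ht. destruct (horizontal_triangle_eq t 0 1) as [_ Hdot]; try lra.
  destruct (line_param_spec t) as [Ex Ey]. fold a b in Hdot.
  replace (x 0 - x t) with (- line_param t * a) in Hdot by lra.
  replace (y 0 - y t) with (- line_param t * b) in Hdot by lra.
  pose proof direction_sq_gt0. nra.
Qed.

Lemma continuity_line_param : continuity line_param.
Proof.
  intros t. apply continuity_pt_filterlim, (@ex_derive_continuous R_AbsRing R_NormedModule).
  unfold line_param. auto_derive; auto using ex_derive_x, ex_derive_y.
Qed.

Lemma line_param_surjective l : exists t, line_param t = l.
Proof.
  set (gauge := fun l => koranyi_norm (R_line (x 0) (y 0) (u 0) a b l)).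
  pose proof (continuity_koranyi_norm_R_line (x 0) (y 0) (u 0) a b) as Hgauge.
  assert (Hescape : forall F, Filter F ->
            filterlim (fun t => koranyi_norm (curve x y u t)) F (Rbar_locally p_infty) ->
            filterlim (fun t => gauge (line_param t)) F (Rbar_locally p_infty)).
  { intros F FF. apply filterlim_ext. intros t. unfold gauge. now rewrite curve_eq_R_line. }
  destruct Hknot as (_ & _ & _ & _ & Hp & Hm).
  apply continuity_surjective_of_filterlim; [apply continuity_line_param | |].
  - apply (filterlim_p_infty_of_escape _ gauge _ 1 Hgauge (Hescape _ _ Hp)).
    exists 1. apply line_param_ge1.
  - apply (filterlim_m_infty_of_escape _ gauge _ 0 Hgauge (Hescape _ _ Hm)).
    exists 0. apply line_param_le0.
Qed.

End LegendrianKnot.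

Theorem proposition4p2 (x y u : R -> R) :
  open_legendrian_knot x y u ->
  (forall s t : R,
      koranyi_dist (curve x y u s) (curve x y u t) = arc_dist x y s t) ->
  is_infinite_R_circle (fun p => exists t, p = curve x y u t).
Proof.
  intros Hknot Hdist.
  exists (x 0), (y 0), (u 0), (x 1 - x 0), (y 1 - y 0). split.
  - pose proof (direction_sq_gt0 x y u Hknot Hdist) as Hdir.
    destruct (Req_dec (x 1 - x 0) 0) as [Ha|Ha]; [right; intros Hb|now left].
    rewrite Ha, Hb in Hdir. simpl in Hdir. lra.
  - intros p. split.
    + intros [t ->]. exists (line_param x y t). apply curve_eq_R_line; assumption.
    + intros [l ->]. destruct (line_param_surjective x y u Hknot Hdist l) as [t <-].
      exists t. symmetry. apply curve_eq_R_line; assumption.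
Qed.
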